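(* Let $M\ge1$, let $\zeta_M$ be a primitive $M$-th root of unity, and let $f(x)\in\mathbb C[x]$ be monic with $f(0)\neq0$. Then $f(x)$ divides $f(x^k)$ in $\mathbb C[x]$ for all integers $k\ge1$ with $k\equiv1\pmod M$ if and only if $f(x)$ equals, up to a nonzero constant factor, $\operatorname{lcm}_{m\ge1,\,0\le j\le M-1}(\zeta_M^jx^m-1)^{h_{m,j}}$ for some integers $h_{m,j}\ge0$, only finitely many of which are nonzero. *)

From mathcomp Require Import all_boot all_algebra.
From mathcomp Require Import complex.
From mathcomp Require Import Rstruct.
From Stdlib Require Import Reals.

Set Implicit Arguments.
Unset Strict Implicit.
Unset Printing Implicit Defensive.

Import GRing.Theory Num.Theory.
Local Open Scope ring_scope.

Definition C : numClosedFieldType := (Rdefinitions.R)[i].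

(* lcm of two polynomials over a field (well defined up to a nonzero
   constant factor, which is all the statement uses). *)
Definition lcmp (p q : {poly C}) : {poly C} := (p * q) %/ gcdp p q.

Definition lcm_family (M : nat) (zeta : C) (N : nat)
    (h : nat -> 'I_M -> nat) : {poly C} :=
  \big[lcmp/1]_(1 <= m < N.+1)
     \big[lcmp/1]_(j < M) ((zeta ^+ j)%:P * 'X^m - 1) ^+ (h m j).

From mathcomp Require Import all_boot all_algebra.
From mathcomp Require Import complex.
From mathcomp Require Import zify.
From mathcomp Require Import boolp.

Import GRing.Theory Num.Theory.
Local Open Scope ring_scope.

(* If [f] divides [f(x^k)] whenever [k = 1 mod M], then [mup a f <= mup (a^k) f]
   for all such [k]; as [f] has finitely many roots, every root [a] is a root of
   unity.  If [d] is its order and [m = d / gcd(d, M)], then every [b] with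
   [b^m = a^m] is a power [a^k] with [k = 1 mod M], so [a] has the least
   multiplicity among the zeros of the factor [zeta^j x^m - 1] through it.
   Choosing [h m j] as that least multiplicity gives [f] and the lcm the same
   multiplicity everywhere.  Conversely, the multiplicity of the lcm at [b] is the
   largest exponent of a factor vanishing at [b], and such a factor also vanishes
   at [b^k]. *)

Section MultiplicityField.
Context {F : fieldType}.
Implicit Types (a c : F) (p q : {poly F}).

Lemma mup_dvdp a p q : q != 0 -> p %| q -> (mup a p <= mup a q)%N.
Proof.
move=> q0 pq; have p0 : p != 0 by apply: contraNneq q0 => p0; rewrite -dvd0p -p0.
by rewrite mup_geq //; apply: dvdp_trans pq; rewrite -mup_geq.
Qed.

Lemma mup_gt0 a p : p != 0 -> (0 < mup a p)%N = root p a.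
Proof. by move=> p0; rewrite -XsubC_dvd // dvdp_XsubCl. Qed.

Lemma mupZ a c p : c != 0 -> mup a (c *: p) = mup a p.
Proof. by move=> c0; rewrite -mul_polyC mupMr // rootC. Qed.

Lemma mupX a p n : p != 0 -> mup a (p ^+ n) = (n * mup a p)%N.
Proof.
move=> p0; elim: n => [|n IHn]; first by rewrite expr0 mupNroot // root1.
by rewrite exprS mupM ?expf_neq0 // IHn mulSn.
Qed.

Lemma mup_gcdp a p q : p != 0 -> q != 0 ->
  mup a (gcdp p q) = minn (mup a p) (mup a q).
Proof.
move=> p0 q0; apply/eqP; rewrite eqn_leq leq_min !mup_dvdp ?dvdp_gcdl ?dvdp_gcdr //=.
by rewrite mup_geq ?gcdp_eq0 ?negb_and ?p0 // dvdp_gcd -!mup_geq ?geq_minl ?geq_minr.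
Qed.

Lemma dvdp_prod_XsubC (s : seq F) q : q != 0 ->
  (forall a, count_mem a s <= mup a q)%N -> \prod_(x <- s) ('X - x%:P) %| q.
Proof.
elim: s q => [|x s IHs] q q0 le_count; first by rewrite big_nil dvd1p.
have /factor_theorem [q1 def_q] : root q x.
  by rewrite -dvdp_XsubCl XsubC_dvd // (leq_trans _ (le_count x)) //= eqxx.
have q10 : q1 != 0 by apply: contraNneq q0 => q10; rewrite def_q q10 mul0r.
rewrite big_cons mulrC def_q dvdp_mul2r ?polyXsubC_eq0 // IHs // => a.
have := le_count a; rewrite def_q mupM ?polyXsubC_eq0 // (mup_XsubCX 1) /=.
by rewrite eq_sym; case: (_ == _) => /=; rewrite ?addn0 ?addn1 ?ltnS ?add1n.
Qed.

End MultiplicityField.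

Section MultiplicityClosedField.
Context {F : closedFieldType}.
Implicit Types p q : {poly F}.

Lemma dvdp_mup p q : p != 0 -> q != 0 ->
  (forall a, mup a p <= mup a q)%N -> p %| q.
Proof.
move=> p0 q0 le_mup; have [s def_p] := closed_field_poly_normal p.
rewrite def_p dvdpZl ?lead_coef_eq0 // dvdp_prod_XsubC // => a.
by rewrite -mu_prod_XsubC -(mupZ a (lead_coef p)) ?lead_coef_eq0 // -def_p.
Qed.

Lemma eqp_mup p q : p != 0 -> q != 0 -> (forall a, mup a p = mup a q) -> p %= q.
Proof.
by move=> p0 q0 eq_mup; rewrite /eqp !dvdp_mup // => a; rewrite eq_mup.
Qed.

End MultiplicityClosedField.

Section MultiplicityNumField.
Context {F : numFieldType}.
Implicit Types (a b c z : F) (p : {poly F}).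

(* The root is simple because [k a^(k-1) != 0] in characteristic 0. *)
Lemma mup_XnsubC a c k : a != 0 -> (0 < k)%N ->
  mup a ('X^k - c%:P) = (a ^+ k == c).
Proof.
move=> a0 k0; have [<-|ne] := eqVneq (a ^+ k) c; last first.
  by rewrite mupNroot // rootE !hornerE subr_eq0.
have -> : 'X^k - (a ^+ k)%:P =
    ('X - a%:P) * \sum_(i < k) 'X ^+ (k.-1 - i) * a%:P ^+ i.
  by rewrite rmorphXn subrXX.
rewrite mupMl ?(mup_XsubCX 1) ?eqxx // rootE horner_sum.
have -> : \sum_(i < k) ('X ^+ (k.-1 - i) * a%:P ^+ i).[a] = \sum_(i < k) a ^+ k.-1.
  apply: eq_bigr => i _; rewrite hornerM hornerXn -rmorphXn hornerC -exprD.
  by rewrite subnK // -ltnS prednK.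
by rewrite sumr_const card_ord -mulr_natl mulf_eq0 pnatr_eq0 negb_or -lt0n k0 expf_neq0.
Qed.

Lemma CXnsub1E z m : z != 0 -> z%:P * 'X^m - 1 = z *: ('X^m - (z^-1)%:P).
Proof. by move=> z0; rewrite scalerBr -!mul_polyC -polyCM mulfV. Qed.

Lemma CXnsub1_neq0 z m : z != 0 -> (0 < m)%N -> z%:P * 'X^m - 1 != 0.
Proof.
by move=> z0 m0; rewrite CXnsub1E // scaler_eq0 negb_or z0 monic_neq0 ?monicXnsubC.
Qed.

Lemma mup_CXnsub1X b z m h : z != 0 -> (0 < m)%N ->
  mup b ((z%:P * 'X^m - 1) ^+ h) = (if z * b ^+ m == 1 then h else 0%N).
Proof.
move=> z0 m0; rewrite mupX; last exact: CXnsub1_neq0.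
have [zbm|zbm] := eqVneq (z * b ^+ m) 1; last first.
  by rewrite mupNroot ?muln0 // rootE !hornerE subr_eq0.
have b0 : b != 0.
  by apply: contra_eq_neq zbm => ->; rewrite expr0n gtn_eqF // mulr0 eq_sym oner_eq0.
have bm : b ^+ m = z^-1 by rewrite -[b ^+ m](mulKf z0) zbm mulr1.
by rewrite CXnsub1E // mupZ // mup_XnsubC // bm eqxx muln1.
Qed.

End MultiplicityNumField.

Lemma mup_comp_Xn {F : numClosedFieldType} (a : F) p k :
  p != 0 -> a != 0 -> (0 < k)%N -> mup a (p \Po 'X^k) = mup (a ^+ k) p.
Proof.
move=> p0 a0 k0; have [s ->] := closed_field_poly_normal p.
rewrite comp_polyZ !mupZ ?lead_coef_eq0 // mu_prod_XsubC rmorph_prod /=.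
under eq_bigr do rewrite comp_polyB comp_polyX comp_polyC.
elim: s => [|x s IHs]; first by rewrite big_nil mupNroot ?root1.
rewrite big_cons mupM ?monic_neq0 ?monicXnsubC ?monic_prod // => [|i _].
  by rewrite IHs mup_XnsubC //= eq_sym.
exact: monicXnsubC.
Qed.

Lemma dvdp_comp_Xn_mup {F : numClosedFieldType} (p : {poly F}) k :
  p != 0 -> p.[0] != 0 -> (0 < k)%N -> (forall a, mup a p <= mup (a ^+ k) p)%N ->
  p %| p \Po 'X^k.
Proof.
move=> p0 p00 k_gt0 le_mup; apply: dvdp_mup => // [|a].
  by rewrite comp_poly_eq0 ?size_polyXn.
have [->|a0] := eqVneq a 0; first by rewrite mupNroot // rootE.
by rewrite mup_comp_Xn.
Qed.

Lemma prim_root_neq0 {R : nzRingType} {n} {z : R} : n.-primitive_root z -> z != 0.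
Proof.
move=> prim_z; apply: contra_eq_neq (prim_expr_order prim_z) => ->.
by rewrite expr0n gtn_eqF ?(prim_order_gt0 prim_z) // eq_sym oner_eq0.
Qed.

Lemma prim_root_expr_cong1 {F : fieldType} {a b : F} {d M : nat} :
  d.-primitive_root a -> (0 < M)%N ->
  b ^+ (d %/ gcdn d M) = a ^+ (d %/ gcdn d M) -> exists t, b = a ^+ (1 + M * t).
Proof.
move=> prim_a M_gt0; set g := gcdn d M; set m := (d %/ g)%N => bm.
have d_gt0 := prim_order_gt0 prim_a; have ad := prim_expr_order prim_a.
have a0 := prim_root_neq0 prim_a.
have def_d : d = (m * g)%N by rewrite divnK // dvdn_gcdl.
have m_gt0 : (0 < m)%N by move: d_gt0; rewrite def_d muln_gt0 => /andP[].
have prim_ag : m.-primitive_root (a ^+ g).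
  rewrite -[g](mulKn _ m_gt0) -def_d; apply: (dvdn_prim_root prim_a).
  by rewrite def_d dvdn_mulr.
have ba_m : (b / a) ^+ m = 1 by rewrite exprMn exprVn bm divff // expf_neq0.
have [t ba] := prim_rootP prim_ag ba_m.
(* Bezout: [M] divides [g + u d] for some [u], and [a ^+ d = 1] absorbs [u d]. *)
have [u _] := Bezoutl d M_gt0; rewrite gcdnC -/g => /divnK M_dvd.
exists ((g + u * d) %/ M * t)%N.
have -> : (M * ((g + u * d) %/ M * t) = g * t + d * (u * t))%N.
  by rewrite mulnA [(M * _)%N]mulnC M_dvd; nia.
by rewrite exprD expr1 exprD !exprM ad !expr1n mulr1 -ba mulrC divfK.
Qed.

Section CompositionInvariantPolynomial.
Context {F : numClosedFieldType}.
Variables (M : nat) (zeta : F) (f : {poly F}).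
Hypotheses (prim_zeta : M.-primitive_root zeta) (f_neq0 : f != 0) (f0_neq0 : f.[0] != 0).
Hypothesis dvdp_comp : forall k, (1 <= k)%N -> k = 1 %[mod M] -> f %| f \Po 'X^k.

Let M_gt0 : (0 < M)%N := prim_order_gt0 prim_zeta.

Lemma mup_le_expr_cong1 a t : (mup a f <= mup (a ^+ (1 + M * t)) f)%N.
Proof.
have [->|a0] := eqVneq a 0; first by rewrite mupNroot // rootE.
have k_gt0 : (0 < 1 + M * t)%N by rewrite addnC addn1.
have k_cong1 : 1 + M * t = 1 %[mod M] by rewrite addnC mulnC modnMDl.
rewrite -mup_comp_Xn // mup_dvdp ?dvdp_comp //.
by rewrite comp_poly_eq0 ?size_polyXn.
Qed.

Lemma root_unity a : root f a -> exists2 n, (0 < n)%N & a ^+ n = 1.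
Proof.
move=> fa; pose s := [seq a ^+ (1 + M * t) | t <- iota 0 (size f)].
have roots_s : all (root f) s.
  apply/allP => _ /mapP[t _ ->].
  by rewrite -mup_gt0 // (leq_trans _ (mup_le_expr_cong1 a t)) // mup_gt0.
have /(uniqPn 0)[i [j [lt_ij lt_j]]] : ~~ uniq s.
  apply/negP => /(max_poly_roots f_neq0 roots_s).
  by rewrite size_map size_iota ltnn.
rewrite size_map size_iota in lt_j.
rewrite !(nth_map 0) ?size_iota 1?(ltn_trans lt_ij) // !nth_iota 1?(ltn_trans lt_ij) //.
rewrite !add0n => eq_ij; exists (M * (j - i))%N; first by rewrite muln_gt0 M_gt0 subn_gt0.
have a0 : a != 0 by apply: contraTneq fa => ->; rewrite rootE.
apply: (mulfI (expf_neq0 (1 + M * i) a0)); rewrite -exprD mulr1 eq_ij.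
by rewrite -addnA -mulnDr subnKC // ltnW.
Qed.

Definition minimal_on_fiber m (j : 'I_M) a :=
  zeta ^+ j * a ^+ m = 1 /\
  forall b, zeta ^+ j * b ^+ m = 1 -> (mup a f <= mup b f)%N.

Lemma exists_minimal_fiber a : root f a ->
  exists m, (0 < m)%N /\ exists j, minimal_on_fiber m j a.
Proof.
move=> fa; have [n n_gt0 an] := root_unity _ fa.
have [d prim_a _] := prim_order_exists n_gt0 an.
have d_gt0 := prim_order_gt0 prim_a.
have a0 : a != 0 by apply: contraTneq fa => ->; rewrite rootE.
set m := (d %/ gcdn d M)%N.
have m_gt0 : (0 < m)%N by rewrite divn_gt0 ?gcdn_gt0 ?d_gt0 // dvdn_leq ?dvdn_gcdl.
have d_dvd_mM : (d %| m * M)%N.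
  by rewrite divn_mulAC ?dvdn_gcdl // -muln_divA ?dvdn_gcdr // dvdn_mulr.
have amM : (a ^+ m)^-1 ^+ M = 1.
  by apply/eqP; rewrite exprVn -exprM invr_eq1 -(prim_order_dvd prim_a).
have [j zj] := prim_rootP prim_zeta amM.
have zj0 : zeta ^+ j != 0 by rewrite -zj invr_eq0 expf_neq0.
have zja : zeta ^+ j * a ^+ m = 1 by rewrite -zj mulVf ?expf_neq0.
exists m; split; first exact: m_gt0.
exists j; split; first exact: zja.
move=> b zjb.
have [t ->] : exists t, b = a ^+ (1 + M * t).
  by apply: (prim_root_expr_cong1 prim_a M_gt0); apply: (mulfI zj0); rewrite zjb.
exact: mup_le_expr_cong1.
Qed.

End CompositionInvariantPolynomial.

Lemma lcmp_neq0 (p q : {poly C}) : p != 0 -> q != 0 -> lcmp p q != 0.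
Proof.
move=> p0 q0; apply: contraTneq (mulf_neq0 p0 q0) => l0.
by rewrite -[p * q](divpK (dvdp_mulr q (dvdp_gcdl p q))) -/(lcmp p q) l0 mul0r eqxx.
Qed.

Lemma mup_lcmp a (p q : {poly C}) : p != 0 -> q != 0 ->
  mup a (lcmp p q) = maxn (mup a p) (mup a q).
Proof.
move=> p0 q0; have := congr1 (mup a) (divpK (dvdp_mulr q (dvdp_gcdl p q))).
rewrite -/(lcmp p q) !mupM ?lcmp_neq0 ?gcdp_eq0 ?negb_and ?p0 // mup_gcdp //.
lia.
Qed.

Section BigLcm.
Variables (I : Type) (r : seq I) (P : pred I) (F : I -> {poly C}).
Hypothesis F_neq0 : forall i, P i -> F i != 0.

Lemma big_lcmp_neq0 : \big[lcmp/1]_(i <- r | P i) F i != 0.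
Proof. by apply: (big_ind (fun p => p != 0)); [exact: oner_neq0 | exact: lcmp_neq0 |]. Qed.

Lemma mup_big_lcmp a :
  mup a (\big[lcmp/1]_(i <- r | P i) F i) = (\max_(i <- r | P i) mup a (F i))%N.
Proof.
suff [] : \big[lcmp/1]_(i <- r | P i) F i != 0 /\
    mup a (\big[lcmp/1]_(i <- r | P i) F i) = (\max_(i <- r | P i) mup a (F i))%N by [].
apply: (big_ind2 (fun p n => p != 0 /\ mup a p = n)).
- by rewrite oner_neq0 mupNroot ?root1.
- by move=> p1 n1 p2 n2 [p10 <-] [p20 <-]; rewrite lcmp_neq0 ?mup_lcmp.
- by move=> i Pi; rewrite F_neq0.
Qed.

End BigLcm.

Section LcmFamily.
Variables (M : nat) (zeta : C) (N : nat) (h : nat -> 'I_M -> nat).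
Hypothesis zeta_neq0 : zeta != 0.

Let term_neq0 m (j : 'I_M) : (0 < m)%N -> ((zeta ^+ j)%:P * 'X^m - 1) ^+ h m j != 0.
Proof. by move=> m_gt0; rewrite expf_neq0 ?CXnsub1_neq0 ?expf_neq0. Qed.

Lemma lcm_family_neq0 : lcm_family zeta N h != 0.
Proof.
rewrite /lcm_family big_nat_cond; apply: big_lcmp_neq0 => m /andP[/andP[m_gt0 _] _].
by apply: big_lcmp_neq0 => j _; apply: term_neq0.
Qed.

Lemma mup_lcm_family b : mup b (lcm_family zeta N h) =
  (\max_(1 <= m < N.+1) \max_(j < M)
      (if (zeta ^+ j * b ^+ m == 1)%R then h m j else 0))%N.
Proof.
rewrite /lcm_family [in LHS]big_nat_cond [in RHS]big_nat_cond mup_big_lcmp.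
  apply: eq_bigr => m /andP[/andP[m_gt0 _] _]; rewrite mup_big_lcmp.
    by apply: eq_bigr => j _; rewrite mup_CXnsub1X ?expf_neq0.
  by move=> j _; apply: term_neq0.
move=> m /andP[/andP[m_gt0 _] _].
by apply: big_lcmp_neq0 => j _; apply: term_neq0.
Qed.

End LcmFamily.

Lemma mup_lcm_family_le_expr_cong1 M zeta N (h : nat -> 'I_M -> nat) b k :
  M.-primitive_root zeta -> k = 1 %[mod M] ->
  (mup b (lcm_family zeta N h) <= mup (b ^+ k) (lcm_family zeta N h))%N.
Proof.
move=> prim_zeta k_cong1; have zeta0 := prim_root_neq0 prim_zeta.
rewrite !(mup_lcm_family _ _ _ _ zeta0); apply/bigmax_leqP_seq => m m_in _.
apply: (bigmaxn_sup_seq _ m_in isT); apply/bigmax_leqP => j _.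
apply: (bigmax_sup j isT); case: eqP => [zjb|_]; last exact: leq0n.
rewrite ifT //.
(* [b ^+ m] is an [M]-th root of unity, on which [k = 1 %[mod M]] acts trivially. *)
have zjM : (zeta ^+ j) ^+ M = 1.
  by rewrite -exprM mulnC exprM (prim_expr_order prim_zeta) expr1n.
have bmM : (b ^+ m) ^+ M = 1.
  by move: (congr1 (fun x => x ^+ M) zjb); rewrite exprMn zjM mul1r expr1n.
by rewrite -exprM mulnC exprM -(expr_mod _ bmM) k_cong1 expr_mod // zjb.
Qed.

Lemma exists_bounded_witness (T : eqType) (s : seq T) (P : T -> nat -> Prop) :
  (forall x, x \in s -> exists n, P x n) ->
  exists N, forall x, x \in s -> exists2 n, (n <= N)%N & P x n.
Proof.
elim: s => [|y s IHs] Ps; first by exists 0%N.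
have [N HN] := IHs (fun x xs => Ps x (mem_behead (s := y :: s) xs)).
have [n Pyn] := Ps y (mem_head y s).
exists (maxn n N) => x; rewrite inE => /predU1P[-> | xs]; first by exists n; rewrite ?leq_maxl.
by have [k kN Pxk] := HN x xs; exists k; rewrite // (leq_trans kN) ?leq_maxr.
Qed.

Lemma exists_lcm_family M zeta (f : {poly C}) :
  M.-primitive_root zeta -> f != 0 -> f.[0] != 0 ->
  (forall k, (1 <= k)%N -> k = 1 %[mod M] -> f %| f \Po 'X^k) ->
  exists (h : nat -> 'I_M -> nat) (N : nat),
    (forall m j, (N < m)%N -> h m j = 0%N) /\
    exists c : C, c != 0 /\ f = c *: lcm_family zeta N h.
Proof.
move=> prim_zeta f0 f00 dvdp_comp; have zeta0 := prim_root_neq0 prim_zeta.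
have [rs def_f] := closed_field_poly_normal f.
have root_f a : root f a = (a \in rs).
  by rewrite def_f rootZ ?lead_coef_eq0 // root_prod_XsubC.
have [N fibers] : exists N, forall a, a \in rs ->
    exists2 m, (m <= N)%N & (0 < m)%N /\ exists j, minimal_on_fiber M zeta f m j a.
  by apply: exists_bounded_witness => a; rewrite -root_f; apply: exists_minimal_fiber.
pose h m j := if (m <= N)%N then
  (\max_(a <- rs | `[< minimal_on_fiber M zeta f m j a >]) mup a f)%N else 0%N.
exists h, N; split=> [m j lt_Nm | ]; first by rewrite /h leqNgt lt_Nm.
have L0 : lcm_family zeta N h != 0 by apply: lcm_family_neq0.
have mup_f b : mup b f = mup b (lcm_family zeta N h).
  apply/eqP; rewrite eqn_leq (mup_lcm_family _ _ _ _ zeta0); apply/andP; split; last first.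
    apply/bigmax_leqP_seq => m _ _; apply/bigmax_leqP => j _.
    have [zjb|] := eqVneq (zeta ^+ j * b ^+ m) 1; last by [].
    rewrite /h; case: ifP => // _.
    by apply/bigmax_leqP_seq => a _ /asboolP[_ min_a]; apply: min_a.
  have [fb|/mupNroot-> //] := boolP (root f b).
  have [m le_mN [m_gt0 [j [zjb min_b]]]] := fibers b (etrans (esym (root_f b)) fb).
  have m_in : m \in index_iota 1 N.+1 by rewrite mem_index_iota m_gt0 ltnS.
  apply: (bigmaxn_sup_seq _ m_in isT); apply: (bigmax_sup j isT).
  rewrite zjb eqxx /h le_mN.
  by apply: leq_bigmax_seq; [rewrite -root_f | apply/asboolP].
have := eqp_mup _ _ f0 L0 mup_f.
case/eqpP => [[c1 c2] /andP[c10 c20] /= eq_c].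
exists (c1^-1 * c2); split; first by rewrite mulf_neq0 ?invr_eq0.
by rewrite -scalerA -eq_c scalerA mulVf // scale1r.
Qed.

Theorem lemma2 (M : nat) (zeta : C) (f : {poly C}) :
  (1 <= M)%N -> M.-primitive_root zeta ->
  f \is monic -> f.[0] != 0 ->
  ((forall k : nat, (1 <= k)%N -> k = 1 %[mod M] -> f %| f \Po 'X^k) <->
   exists (h : nat -> 'I_M -> nat) (N : nat),
     (forall (m : nat) (j : 'I_M), (N < m)%N -> h m j = 0%N) /\
     exists c : C, c != 0 /\ f = c *: lcm_family zeta N h).
Proof.
move=> _ prim_zeta /monic_neq0 f0 f00; split; first exact: exists_lcm_family.
move=> [h [N [_ [c [c0 def_f]]]]] k k_gt0 k_cong1.
have mup_f a : mup a f = mup a (lcm_family zeta N h) by rewrite def_f mupZ.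
apply: (dvdp_comp_Xn_mup _ _ f0 f00 k_gt0) => a; rewrite !mup_f.
exact: mup_lcm_family_le_expr_cong1.
Qed.
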